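(* Let $n\ge2$, $d_1,\dots,d_n\ge2$, and let $\rho$ be a pure state (rank-one density operator) on $\mathbb{C}^{d_1}\otimes\cdots\otimes\mathbb{C}^{d_n}$. Let $T^{(12\cdots n)}$ be the vector with entries $t_{u_1,\dots,u_n}=\operatorname{tr}\big(\rho\,(A^{(1)}_{u_1})^\dagger\otimes\cdots\otimes(A^{(n)}_{u_n})^\dagger\big)$ for all $u_s\in\{1,\dots,d_s^2-1\}$, $s=1,\dots,n$. Then $$\|T^{(12\cdots n)}\|^2\le\frac{d_1\cdots d_n\big(n-1-\sum_{s=1}^n\frac{1}{d_s^2}\big)+1}{n-1}.$$
   Context: Generalized Pauli operators: for an integer $d\ge2$, let $\omega$ be a fixed primitive $d$-th root of unity and $E_{m,j}$ the $d\times d$ matrix units (indices modulo $d$). Writing $u\in\{0,\dots,d^2-1\}$ uniquely as $u=di+j$ with $0\le i,j\le d-1$, set $A_u=\sum_{m=0}^{d-1}\omega^{im}E_{m,m+j}$; so $A_0=I_d$ and $\operatorname{tr}(A_uA_v^\dagger)=d\delta_{uv}$. $A^{(s)}_u$ denotes these for $d=d_s$. $\|v\|=\sqrt{v^\dagger v}$. *)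

From HB Require Import structures.
From mathcomp Require Import all_boot all_order all_algebra.
Set Implicit Arguments. Unset Strict Implicit. Unset Printing Implicit Defensive.
Import Order.TTheory GRing.Theory Num.Theory.
Local Open Scope ring_scope.

(* Complex scalars: an arbitrary numClosedFieldType C (e.g. complex R for a
   real closed field R, or algC); conjugation is z^*. *)

(* Generalized Pauli operator A_u for u = d*i + j (0 <= i,j < d):
   A_u = \sum_m w^(i m) E_{m, m+j (mod d)}. *)
Definition pauli (C : numClosedFieldType) (d : nat) (w : C) (u : nat) : 'M[C]_d :=
  \matrix_(a < d, b < d)
    if (b : nat) == ((a + u %% d) %% d)%N then w ^+ (u %/ d * a)%N else 0.

Definition adjmx (C : numClosedFieldType) (m n : nat) (M : 'M[C]_(m, n)) : 'M[C]_(n, m) :=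
  (map_mx (fun z => z^*) M)^T.

(* Multi-indices of the computational basis of C^{d_1} (x) ... (x) C^{d_n}. *)
Notation multi_index n d := {dffun forall s : 'I_n, 'I_(d s)}.

Definition pure_state (C : numClosedFieldType) (n : nat) (d : 'I_n -> nat)
  (rho : multi_index n d -> multi_index n d -> C) : Prop :=
  exists psi : multi_index n d -> C,
    \sum_(i : multi_index n d) `|psi i| ^+ 2 = 1 /\
    forall i j, rho i j = psi i * (psi j)^*.

(* Entry (j, i) of the Kronecker product (A_1)^dagger (x) ... (x) (A_n)^dagger. *)
Definition kron_adj_entry (C : numClosedFieldType) (n : nat) (d : 'I_n -> nat)
  (A : forall s : 'I_n, 'M[C]_(d s)) (j i : multi_index n d) : C :=
  \prod_(s : 'I_n) adjmx (A s) (j s) (i s).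

Definition corr_entry (C : numClosedFieldType) (n : nat) (d : 'I_n -> nat)
  (w : 'I_n -> C) (rho : multi_index n d -> multi_index n d -> C)
  (u : {dffun forall s : 'I_n, 'I_(d s ^ 2)}) : C :=
  \sum_(i : multi_index n d) \sum_(j : multi_index n d)
     rho i j * kron_adj_entry (fun s => pauli (d s) (w s) (u s)) j i.

(* ||T^{(12..n)}||^2, sum over u_s in {1, ..., d_s^2 - 1}. *)
Definition corr_norm2 (C : numClosedFieldType) (n : nat) (d : 'I_n -> nat)
  (w : 'I_n -> C) (rho : multi_index n d -> multi_index n d -> C) : C :=
  \sum_(u : {dffun forall s : 'I_n, 'I_(d s ^ 2)} | [forall s, (u s : nat) != 0%N])
     `|corr_entry w rho u| ^+ 2.

From HB Require Import structures.
From mathcomp Require Import all_boot all_order all_algebra.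
From mathcomp Require Import zify ring.
Set Implicit Arguments. Unset Strict Implicit. Unset Printing Implicit Defensive.
Import Order.TTheory GRing.Theory Num.Theory.
Local Open Scope ring_scope.

(* Let psi be the state vector and f(u) = |t_u|^2 for every u, including the
   u with trivial components u_s = 0 (A_0 = I). Completeness of the generalized
   Pauli basis shows that the sum Q(S) of f over the u supported in a set S of
   parties is (prod_{s in S} d_s) tr rho_S^2. For a pure state tr rho_S^2 =
   tr rho_{S^c}^2 and tr rho^2 = 1; hence f(0) = 1, sum_u f(u) = d_1...d_n, and
   Q(all but s) = (d_1...d_n / d_s^2) Q({s}) >= d_1...d_n / d_s^2. Finally
   sum_s Q(all but s) = sum_u z(u) f(u), where z(u) counts the trivial
   components of u; as z(u) <= n - 1 for u <> 0, weighting f by n - 1 - z(u)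
   gives (n - 1) ||T||^2 - 1 <= (n - 1) d_1...d_n - sum_s d_1...d_n / d_s^2. *)

Lemma prodr_sum_dffun (R : comPzSemiRingType) (I : finType) (T_ : I -> finType)
    (F : forall i, T_ i -> R) :
  \prod_(i : I) \sum_(x : T_ i) F i x =
  \sum_(f : {dffun forall i, T_ i}) \prod_(i : I) F i (f i).
Proof.
pose P_ i := [ffun x => F i x].
transitivity (\prod_(i : I) \sum_(x : T_ i) P_ i x).
  by apply: eq_bigr => i _; apply: eq_bigr => x _; rewrite ffunE.
rewrite (reindex (@dffun_of_fprod I T_)); last exact/onW_bij/dffun_of_fprod_bij.
under [RHS]eq_bigr => t _ do under eq_bigr => i _ do rewrite ffunE -[F i _]ffunE.
rewrite (big_fprod 1 +%R P_).
under eq_bigr => i _ do rewrite (big_tag P_ i).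
by rewrite bigA_distr_big_dep.
Qed.

Lemma prod_nat_eq_dffun (R : comPzSemiRingType) (I : finType) (T_ : I -> finType)
    (f g : {dffun forall i, T_ i}) :
  \prod_(i : I) ((f i == g i)%:R : R) = (f == g)%:R.
Proof.
have [->|neq_fg] := eqVneq f g; first by apply: big1 => i _; rewrite eqxx.
have [/existsP [i neq_i]|/existsPn eq_fg] := boolP [exists i, f i != g i].
  by rewrite (bigD1 i) //= (negbTE neq_i) mul0r.
by case/eqP: neq_fg; apply/ffunP => i; apply/eqP; rewrite -[_ == _]negbK eq_fg.
Qed.

Lemma sum_mul_delta (R : pzSemiRingType) (T : finType) (x : T) (F : T -> R) :
  \sum_(y : T) F y * (x == y)%:R = F x.
Proof.
rewrite (bigD1 x) //= eqxx mulr1 big1 ?addr0 // => y /negbTE.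
by rewrite eq_sym => ->; rewrite mulr0.
Qed.

Lemma sum_expr_unity_root_neq1 (R : idomainType) (m : nat) (z : R) :
  z ^+ m = 1 -> z != 1 -> \sum_(q < m) z ^+ q = 0.
Proof.
move=> zm1 z_neq1; apply/eqP; move: (subrX1 z m).
by rewrite zm1 subrr => /esym/eqP; rewrite mulf_eq0 subr_eq0 (negPf z_neq1).
Qed.

Section GeneralizedPauli.
Variables (C : numClosedFieldType) (d : nat) (w : C).
Hypothesis w_prim : d.-primitive_root w.

Let d_gt0 : (0 < d)%N := prim_order_gt0 w_prim.

Lemma prim_root_conjC : w^* = w^-1.
Proof.
have : `|w| ^+ d = 1 by rewrite -normrX prim_expr_order // normr1.
move/eqP; rewrite pexpr_eq1 // => /eqP w_norm1.
by rewrite invC_norm w_norm1 expr1n invr1 mul1r.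
Qed.

Lemma sum_prim_root_character (a a' : 'I_d) :
  \sum_(q < d) (w^* ^+ a * w ^+ a') ^+ q = d%:R * (a == a')%:R.
Proof.
have w_unit : w \is a GRing.unit by rewrite unitfE (prim_root_eq0 w_prim) -lt0n.
rewrite prim_root_conjC exprVn.
have [<-|neq_a] := eqVneq a a'.
  rewrite mulVr ?unitrX //; under eq_bigr do rewrite expr1n.
  by rewrite sumr_const card_ord mulr1.
rewrite mulr0; apply: sum_expr_unity_root_neq1.
  by rewrite exprMn exprVn -!exprM mulnC [(a' * d)%N]mulnC !exprM
    (prim_expr_order w_prim) !expr1n invr1 mulr1.
apply: contra neq_a => /eqP wa_eq1.
have : w ^+ a = w ^+ a' by rewrite -[LHS]mulr1 -wa_eq1 mulrA mulrV ?unitrX // mul1r.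
by move/eqP; rewrite (eq_prim_root_expr w_prim) !modn_small.
Qed.

Lemma pauli_index_subproof (q r : 'I_d) : (q * d + r < d ^ 2)%N.
Proof. by rewrite -mulnn; have := ltn_ord q; have := ltn_ord r; nia. Qed.

(* The index u = d q + r of A_u, with r the shift and q the clock exponent. *)
Definition pauli_index (q r : 'I_d) : 'I_(d ^ 2) := Ordinal (pauli_index_subproof q r).

Lemma big_pauli_index (F : 'I_(d ^ 2) -> C) :
  \sum_(u < d ^ 2) F u = \sum_(q < d) \sum_(r < d) F (pauli_index q r).
Proof.
have div_lt (u : 'I_(d ^ 2)) : (u %/ d < d)%N by rewrite ltn_divLR // mulnn.
pose split_index (u : 'I_(d ^ 2)) :=
  (Ordinal (div_lt u), Ordinal (ltn_pmod u d_gt0)).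
rewrite pair_big /= (reindex (fun qr => pauli_index qr.1 qr.2)) //.
exists split_index => [[q r] _|u _]; last by apply/val_inj; rewrite /= -divn_eq.
congr pair; apply/val_inj => /=.
  by rewrite divnMDl // divn_small ?addn0.
by rewrite modnMDl modn_small.
Qed.

Lemma pauli_indexE (q r a b : 'I_d) :
  pauli d w (pauli_index q r) a b = ((b : nat) == ((a + r) %% d)%N)%:R * w ^+ (q * a).
Proof.
rewrite /pauli mxE /= divnMDl // divn_small // addn0 modnMDl (modn_small (ltn_ord r)).
by case: eqP; rewrite ?mul1r ?mul0r.
Qed.

Lemma sum_shift_delta (a b : 'I_d) :
  \sum_(r < d) ((b : nat) == ((a + r) %% d)%N)%:R = 1 :> C.
Proof.
have r0_lt : ((b + (d - a)) %% d < d)%N by rewrite ltn_pmod.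
have a_le : (a <= d)%N := ltnW (ltn_ord a).
rewrite (bigD1 (Ordinal r0_lt)) //= big1 ?addr0.
  by rewrite modnDmr addnCA subnKC // -modnDmr modnn addn0 modn_small // eqxx.
move=> r /eqP neq_r; case: eqP => // eq_b; exfalso; apply: neq_r; apply/val_inj => /=.
by rewrite eq_b modnDml addnAC subnKC // modnDl modn_small.
Qed.

Lemma pauli_completeness (a b a' b' : 'I_d) :
  \sum_(u < d ^ 2) (pauli d w u a b)^* * pauli d w u a' b' =
  d%:R * (a == a')%:R * (b == b')%:R.
Proof.
rewrite big_pauli_index.
pose delta r (a b : 'I_d) : C := ((b : nat) == ((a + r) %% d)%N)%:R.
have entry q r : (pauli d w (pauli_index q r) a b)^* * pauli d w (pauli_index q r) a' b'
    = delta r a b * delta r a' b' * (w^* ^+ a * w ^+ a') ^+ q.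
  rewrite !pauli_indexE rmorphM rmorphXn /= conjC_nat exprMn -!exprM.
  by rewrite [(a * q)%N]mulnC [(a' * q)%N]mulnC /delta; ring.
under eq_bigr do under eq_bigr do rewrite entry.
rewrite exchange_big /=.
under eq_bigr do rewrite -big_distrr /= sum_prim_root_character.
have [<-|neq_a] := eqVneq a a'; last first.
  by rewrite big1 ?mulr0 ?mul0r // => r _; rewrite mulr0.
rewrite mulr1 -big_distrl /= mulrC; congr (_ * _).
transitivity (\sum_(r < d) (b == b')%:R * delta r a b); last first.
  by rewrite -big_distrr /= sum_shift_delta mulr1.
apply: eq_bigr => r _; rewrite /delta.
by case: (eqVneq (b : nat)) => [<-|]; rewrite ?mul0r ?mulr0 // mul1r mulr1 eq_sym.
Qed.

End GeneralizedPauli.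

Lemma pauli0 (C : numClosedFieldType) (d : nat) (w : C) (a b : 'I_d) :
  pauli d w 0 a b = (a == b)%:R.
Proof.
rewrite /pauli mxE mod0n addn0 modn_small // div0n mul0n expr0.
have -> : (b == a :> nat) = (a == b) by rewrite eq_sym.
by case: (a == b).
Qed.

Section PureState.
Variables (C : numClosedFieldType) (n : nat) (d : 'I_n -> nat) (w : 'I_n -> C).
Variables (psi : multi_index n d -> C) (rho : multi_index n d -> multi_index n d -> C).
Hypothesis w_prim : forall s, (d s).-primitive_root (w s).
Hypothesis psi_normed : \sum_i `|psi i| ^+ 2 = 1.
Hypothesis rho_psi : forall i j, rho i j = psi i * (psi j)^*.

Local Notation I := (multi_index n d).
Local Notation U := {dffun forall s : 'I_n, 'I_(d s ^ 2)}.
Local Notation A s := (pauli (d s) (w s)).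
Local Notation t u := (corr_entry w rho u).

Let d_gt0 s : (0 < d s)%N := prim_order_gt0 (w_prim s).
Let d2_gt0 s : (0 < d s ^ 2)%N := ltac:(by rewrite expn_gt0 d_gt0).

Definition psi4 (i j i' j' : I) := psi i * (psi j)^* * (psi i')^* * psi j'.

Lemma corr_entryE u :
  t u = \sum_(i : I) \sum_(j : I) psi i * (psi j)^* * \prod_s (A s (u s) (i s) (j s))^*.
Proof.
apply: eq_bigr => i _; apply: eq_bigr => j _; rewrite rho_psi; congr (_ * _).
by apply: eq_bigr => s _; rewrite /adjmx !mxE.
Qed.

Lemma corr_entry_norm2E u : `|t u| ^+ 2 =
  \sum_(i : I) \sum_(j : I) \sum_(i' : I) \sum_(j' : I) psi4 i j i' j' *
     \prod_s ((A s (u s) (i s) (j s))^* * A s (u s) (i' s) (j' s)).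
Proof.
rewrite normCK corr_entryE [X in _ * X]rmorph_sum /=.
under [X in _ * X]eq_bigr => i _ do rewrite rmorph_sum /=.
rewrite big_distrl /=; apply: eq_bigr => i _; rewrite big_distrl /=; apply: eq_bigr => j _.
rewrite big_distrr /=; apply: eq_bigr => i' _; rewrite big_distrr /=.
apply: eq_bigr => j' _; rewrite !rmorphM /= rmorph_prod /= conjCK big_split /=.
under [X in _ * (_ * X)]eq_bigr do rewrite conjCK.
by rewrite /psi4; ring.
Qed.

(* [u s = 0] selects the identity A_0, so [u] acts nontrivially only inside [S]. *)
Definition supported (S : pred 'I_n) (u : U) := [forall s, S s || ((u s : nat) == 0)].

Definition corr_norm2_on (S : pred 'I_n) := \sum_(u | supported S u) `|t u| ^+ 2.

(* Contracting with [purity_kernel S] computes tr (rho_S ^ 2): the indices of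
   the parties outside [S] are traced out, those in [S] are contracted as in a
   matrix product. *)
Definition purity_kernel (S : pred 'I_n) s (a b a' b' : 'I_(d s)) : C :=
  if S s then (a == a')%:R * (b == b')%:R else (a == b)%:R * (a' == b')%:R.

Definition reduced_purity (S : pred 'I_n) :=
  \sum_(i : I) \sum_(j : I) \sum_(i' : I) \sum_(j' : I) psi4 i j i' j' *
     \prod_s purity_kernel S (i s) (j s) (i' s) (j' s).

Definition masked_pauli_pair (S : pred 'I_n) s (x : 'I_(d s ^ 2)) (a b a' b' : 'I_(d s)) :=
  if S s || ((x : nat) == 0) then (A s x a b)^* * A s x a' b' else 0.

Lemma sum_masked_pauli_pair (S : pred 'I_n) s (a b a' b' : 'I_(d s)) :
  \sum_(x : 'I_(d s ^ 2)) masked_pauli_pair S x a b a' b' =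
  (if S s then (d s)%:R else 1) * purity_kernel S a b a' b'.
Proof.
rewrite /masked_pauli_pair /purity_kernel; case: (S s) => /=.
  by rewrite (pauli_completeness (w_prim s)) mulrA.
rewrite (bigD1 (Ordinal (d2_gt0 s))) //= big1 ?addr0; last first.
  by move=> x /negPf; rewrite -(inj_eq val_inj) /= => ->.
by rewrite !pauli0 conjC_nat mul1r.
Qed.

Lemma corr_norm2_onE (S : pred 'I_n) :
  corr_norm2_on S = (\prod_(s | S s) (d s)%:R) * reduced_purity S.
Proof.
transitivity (\sum_(u : U) \sum_(i : I) \sum_(j : I) \sum_(i' : I) \sum_(j' : I)
   psi4 i j i' j' * \prod_s masked_pauli_pair S (u s) (i s) (j s) (i' s) (j' s)).
  rewrite /corr_norm2_on big_mkcond; apply: eq_bigr => u _.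
  have [supp_u|/forallPn [s0 not_supp]] := boolP (supported S u).
    rewrite corr_entry_norm2E; do 4! (apply: eq_bigr => ? _); congr (_ * _).
    by apply: eq_bigr => s _; rewrite /masked_pauli_pair (forallP supp_u s).
  symmetry; do 4! (apply: big1 => ? _).
  by rewrite (bigD1 s0) //= /masked_pauli_pair (negbTE not_supp) mul0r mulr0.
rewrite /reduced_purity exchange_big big_distrr /=; apply: eq_bigr => i _.
rewrite exchange_big big_distrr /=; apply: eq_bigr => j _.
rewrite exchange_big big_distrr /=; apply: eq_bigr => i' _.
rewrite exchange_big big_distrr /=; apply: eq_bigr => j' _.
rewrite -big_distrr /=.
rewrite -(prodr_sum_dffun (fun s x => masked_pauli_pair S x (i s) (j s) (i' s) (j' s))).
under eq_bigr => s _ do rewrite sum_masked_pauli_pair.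
by rewrite big_split /= -big_mkcond /=; ring.
Qed.

Lemma eq_reduced_purity (S S' : pred 'I_n) :
  S =1 S' -> reduced_purity S = reduced_purity S'.
Proof.
move=> eq_S; do 4! (apply: eq_bigr => ? _); congr (_ * _).
by apply: eq_bigr => s _; rewrite /purity_kernel eq_S.
Qed.

(* Schmidt symmetry: exchanging the summation indices [j] and [i'] swaps the
   roles of the traced-out and the kept parties. *)
Lemma reduced_purityC (S : pred 'I_n) : reduced_purity (predC S) = reduced_purity S.
Proof.
transitivity (\sum_(i : I) \sum_(j : I) \sum_(i' : I) \sum_(j' : I) psi4 i i' j j' *
     \prod_s purity_kernel S (i s) (i' s) (j s) (j' s)).
  do 4! (apply: eq_bigr => ? _); congr (_ * _); first by rewrite /psi4; ring.
  by apply: eq_bigr => s _; rewrite /purity_kernel /=; case: (S s).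
by apply: eq_bigr => i _; apply: exchange_big.
Qed.

Lemma reduced_purityT : reduced_purity predT = 1.
Proof.
transitivity (\sum_(i : I) \sum_(j : I) `|psi i| ^+ 2 * `|psi j| ^+ 2); last first.
  by rewrite -(mulr1 1) -[in X in X * _]psi_normed big_distrl /=;
    apply: eq_bigr => i _; rewrite -big_distrr /= psi_normed.
apply: eq_bigr => i _; apply: eq_bigr => j _.
transitivity (\sum_(i' : I) (\sum_(j' : I) psi4 i j i' j' * (j == j')%:R) * (i == i')%:R).
  apply: eq_bigr => i' _; rewrite big_distrl /=; apply: eq_bigr => j' _.
  by rewrite /purity_kernel /= big_split /= !prod_nat_eq_dffun; ring.
under eq_bigr do rewrite sum_mul_delta.
by rewrite sum_mul_delta /psi4 !normCK; ring.
Qed.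

Local Notation D := (\prod_(s : 'I_n) (d s)%:R : C).

Definition zero_index : U := [ffun s => Ordinal (d2_gt0 s)].

Lemma corr_norm2_on0 : corr_norm2_on pred0 = `|t zero_index| ^+ 2.
Proof.
rewrite /corr_norm2_on (big_pred1 zero_index) // => u /=.
apply/forallP/eqP => [supp_u|-> s]; last by rewrite ffunE.
by apply/ffunP => s; apply/val_inj; rewrite ffunE /=; apply/eqP; apply: supp_u.
Qed.

Lemma corr_entry_zero_norm2 : `|t zero_index| ^+ 2 = 1.
Proof.
rewrite -corr_norm2_on0 corr_norm2_onE big_pred0_eq mul1r -(reduced_purityT).
by rewrite -reduced_purityC; apply: eq_reduced_purity.
Qed.

Lemma sum_corr_norm2 : \sum_(u : U) `|t u| ^+ 2 = D.
Proof.
have := corr_norm2_onE predT; rewrite reduced_purityT mulr1 => <-.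
by apply: eq_bigl => u; apply/esym/forallP.
Qed.

Lemma corr_norm2_on1_ge1 s : 1 <= corr_norm2_on (pred1 s).
Proof.
rewrite /corr_norm2_on (bigD1 zero_index) /=; last first.
  by apply/forallP => s'; rewrite ffunE orbT.
by rewrite corr_entry_zero_norm2 lerDl sumr_ge0 // => u _; rewrite exprn_ge0.
Qed.

Lemma corr_norm2_onC1 s :
  (d s)%:R ^+ 2 * corr_norm2_on (predC (pred1 s)) = D * corr_norm2_on (pred1 s).
Proof.
rewrite !corr_norm2_onE reduced_purityC big_pred1_eq [X in _ = X * _](bigD1 s) //=; ring.
Qed.

Definition num_trivial (u : U) : nat := \sum_(s : 'I_n) ((u s : nat) == 0).

Lemma sum_corr_norm2_onC1 :
  \sum_(s : 'I_n) corr_norm2_on (predC (pred1 s)) =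
  \sum_(u : U) (num_trivial u)%:R * `|t u| ^+ 2.
Proof.
transitivity (\sum_(s : 'I_n) \sum_(u : U) ((u s : nat) == 0)%:R * `|t u| ^+ 2).
  apply: eq_bigr => s _; rewrite /corr_norm2_on big_mkcond; apply: eq_bigr => u _.
  have -> : supported (predC (pred1 s)) u = ((u s : nat) == 0).
    apply/forallP/idP => [/(_ s)|u_s0 s']; first by rewrite /= eqxx.
    by rewrite /=; case: eqP => [->|].
  by case: eqP; rewrite ?mul1r ?mul0r.
by rewrite exchange_big; apply: eq_bigr => u _; rewrite -big_distrl /= natr_sum.
Qed.

Lemma num_trivial_zero_index : num_trivial zero_index = n.
Proof.
rewrite /num_trivial (eq_bigr (fun _ => 1%N)) ?sum1_card ?card_ord // => s _.
by rewrite ffunE.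
Qed.

Lemma num_trivial_le (u : U) s : (u s : nat) != 0 -> (num_trivial u <= n.-1)%N.
Proof.
move=> u_s_neq0.
have : (num_trivial u < \sum_(s' : 'I_n) 1)%N.
  rewrite /num_trivial (bigD1 s) //= [X in (_ < X)%N](bigD1 s) //= (negbTE u_s_neq0).
  by rewrite ltnS leq_sum // => s' _; exact: leq_b1.
by rewrite sum1_card card_ord; lia.
Qed.

Lemma num_trivial_weight_le (u : U) : (0 < n)%N ->
  [forall s, (u s : nat) != 0]%:R * n.-1%:R - (u == zero_index)%:R
    <= n.-1%:R - (num_trivial u)%:R :> C.
Proof.
move=> n_gt0; have [/forallP full_u|not_full] := boolP [forall s, (u s : nat) != 0].
  have -> : num_trivial u = 0%N.
    by apply: big1 => s _; rewrite (negbTE (full_u s)).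
  have -> : (u == zero_index) = false.
    by apply/negbTE/eqP => u0; have := full_u (Ordinal n_gt0); rewrite u0 ffunE.
  by rewrite mul1r !subr0.
rewrite mul0r sub0r; have [->|neq_u0] := eqVneq u zero_index.
  by rewrite num_trivial_zero_index -{2}(prednK n_gt0) -addn1 natrD opprD addrA subrr sub0r.
have [s u_s_neq0] : exists s, (u s : nat) != 0.
  apply/existsP; apply: contraR neq_u0 => /existsPn u_triv; apply/eqP/ffunP => s.
  by apply/val_inj; rewrite ffunE /=; apply/eqP; rewrite -[_ == _]negbK u_triv.
by rewrite oppr0 subr_ge0 ler_nat (num_trivial_le u_s_neq0).
Qed.

Lemma corr_norm2_weighted_le : (0 < n)%N ->
  corr_norm2 w rho * n.-1%:R - 1 <=
  \sum_(u : U) (n.-1%:R - (num_trivial u)%:R) * `|t u| ^+ 2.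
Proof.
move=> n_gt0.
have -> : corr_norm2 w rho * n.-1%:R - 1 = \sum_(u : U)
    ([forall s, (u s : nat) != 0]%:R * n.-1%:R - (u == zero_index)%:R) * `|t u| ^+ 2.
  under [RHS]eq_bigr do rewrite mulrBl; rewrite sumrB.
  under [X in _ = _ - X]eq_bigr do rewrite mulrC eq_sym.
  rewrite sum_mul_delta corr_entry_zero_norm2 /corr_norm2 big_mkcond big_distrl /=.
  by congr (_ - _); apply: eq_bigr => u _; case: ifP; rewrite ?mul0r // mul1r mulrC.
apply: ler_sum => u _; apply: ler_wpM2r; first exact: exprn_ge0.
exact: num_trivial_weight_le.
Qed.

Lemma weighted_corr_norm2E :
  \sum_(u : U) (n.-1%:R - (num_trivial u)%:R) * `|t u| ^+ 2 =
  n.-1%:R * D - \sum_(s : 'I_n) corr_norm2_on (predC (pred1 s)).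
Proof.
under eq_bigr do rewrite mulrBl.
by rewrite sumrB -big_distrr sum_corr_norm2 sum_corr_norm2_onC1.
Qed.

Lemma sum_corr_norm2_onC1_ge :
  \sum_(s : 'I_n) D / (d s)%:R ^+ 2 <= \sum_(s : 'I_n) corr_norm2_on (predC (pred1 s)).
Proof.
apply: ler_sum => s _.
have ds2_neq0 : (d s)%:R ^+ 2 != 0 :> C by rewrite expf_neq0 // pnatr_eq0 -lt0n.
rewrite -[corr_norm2_on _](mulKf ds2_neq0) corr_norm2_onC1 mulrA [_^-1 * D]mulrC.
rewrite -[X in X <= _]mulr1 ler_wpM2l ?corr_norm2_on1_ge1 //.
by rewrite mulr_ge0 ?invr_ge0 ?exprn_ge0 ?ler0n // prodr_ge0 // => s' _; rewrite ler0n.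
Qed.

Lemma corr_norm2_pure_le : (2 <= n)%N ->
  corr_norm2 w rho <=
    (D * ((n - 1)%:R - \sum_(s : 'I_n) ((d s)%:R ^+ 2)^-1) + 1) / (n - 1)%:R.
Proof.
move=> n_ge2; have n_gt0 : (0 < n)%N := ltnW n_ge2.
have n1_gt0 : 0 < (n - 1)%:R :> C by rewrite ltr0n subn_gt0.
rewrite ler_pdivlMr // -lerBlDr subn1.
apply: le_trans (corr_norm2_weighted_le n_gt0) _.
rewrite weighted_corr_norm2E mulrBr mulr_sumr mulrC lerD2l lerN2.
exact: sum_corr_norm2_onC1_ge.
Qed.

End PureState.

Theorem lemma3 (C : numClosedFieldType) (n : nat) (d : 'I_n -> nat)
  (w : 'I_n -> C) (rho : multi_index n d -> multi_index n d -> C) :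
  (2 <= n)%N ->
  (forall s, 2 <= d s)%N ->
  (forall s, (d s).-primitive_root (w s)) ->
  pure_state rho ->
  corr_norm2 w rho <=
    ((\prod_(s : 'I_n) (d s)%:R) * ((n - 1)%:R - \sum_(s : 'I_n) ((d s)%:R ^+ 2)^-1) + 1)
      / (n - 1)%:R.
Proof.
move=> n_ge2 _ w_prim [psi [psi_normed rho_psi]].
exact: corr_norm2_pure_le w_prim psi_normed rho_psi n_ge2.
Qed.
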